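(* Let $1\le k<n/2$ and let $\Omega$ be the set of $k$-subsets of $\{1,\dots,n\}$ with the natural action of $\mathrm{Sym}(n)$. Then $\mathrm{Sym}(n)$ contains an element of prime order $p$ that is quasi-semiregular on $\Omega$ if and only if $k<p$ and $p\mid n-k$. Moreover, any such quasi-semiregular element of order $p$ has cycle type $1^kp^{(n-k)/p}$ on $\{1,\dots,n\}$.
   Context: A permutation $g$ is quasi-semiregular if $\langle g\rangle$ has a unique fixed point and acts semiregularly (only the identity fixes a point) on the remaining points. *)

From mathcomp Require Import all_boot all_fingroup.
Set Implicit Arguments. Unset Strict Implicit. Unset Printing Implicit Defensive.
Import GroupScope.

(* Omega: the set of k-subsets of {1..n}, modelled as 'I_n. *)
Definition ksubsets (n k : nat) : {set {set 'I_n}} :=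
  [set A : {set 'I_n} | #|A| == k].

Definition set_fixed (n : nat) (h : {perm 'I_n}) (A : {set 'I_n}) : Prop :=
  h @: A = A.

Definition quasi_semiregular_on (n : nat) (Om : {set {set 'I_n}})
  (g : {perm 'I_n}) : Prop :=
  exists A, [/\ A \in Om,
     (forall h, h \in <[g]> -> set_fixed h A),
     (forall B, B \in Om -> (forall h, h \in <[g]> -> set_fixed h B) -> B = A)
   & (forall B, B \in Om -> B != A ->
        forall h, h \in <[g]> -> set_fixed h B -> h = 1)].

Definition has_cycle_type_1k_pm (n : nat) (g : {perm 'I_n}) (k p m : nat)
  : Prop :=
  [/\ #|[set C in porbits g | #|C| == 1%N]| = k,
      #|[set C in porbits g | #|C| == p]| = m
    & forall C, C \in porbits g -> (#|C| == 1%N) || (#|C| == p)].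

(* A permutation g of prime order p has cycles of length 1 and p only, and
   every nontrivial element of <[g]> generates <[g]>; so g is quasi-semiregular
   on k-subsets exactly when a unique k-subset A is g-invariant.  If some
   invariant part of A could be traded for an invariant part of the complement
   of the same size, A would not be unique.  As the complement is larger than A,
   such trades rule out a p-cycle inside A, a fixed point outside A, and k >= p:
   hence A is the fixed-point set of g and k < p, so the cycle type of g is
   1^k p^((n-k)/p).  Conversely, if g has k < p fixed points, an invariant
   k-subset cannot contain a p-cycle, so the fixed-point set is the only one;
   such a g exists when p divides n - k: fix k points and rotate the other
   n - k points by (n - k)/p. *)

From mathcomp Require Import all_boot all_fingroup cyclic.
Import GroupScope.
Set Implicit Arguments. Unset Strict Implicit. Unset Printing Implicit Defensive.

Lemma exists_subset_card (T : finType) (A : {set T}) m :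
  m <= #|A| -> exists2 B : {set T}, B \subset A & #|B| = m.
Proof.
rewrite -bin_gt0 -cards_draws card_gt0 => /set0Pn[B].
by rewrite inE => /andP[sBA /eqP cardB]; exists B.
Qed.

Section Exchange.
Variables (aT : finGroupType) (D : {set aT}) (rT : finType) (to : action D rT).
Variables (G : {set aT}) (A O Q : {set rT}).
Hypotheses (actsA : [acts G, on A | to]) (actsO : [acts G, on O | to]).
Hypotheses (actsQ : [acts G, on Q | to]).
Hypotheses (sOA : O \subset A) (disjQA : [disjoint Q & A]).
Hypotheses (cardQO : #|Q| = #|O|) (Q_neq0 : Q != set0).

Lemma acts_exchange :
  [/\ [acts G, on A :\: O :|: Q | to], #|A :\: O :|: Q| = #|A| & A :\: O :|: Q != A].
Proof.
split; first by apply: actsU => //; apply: actsD.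
- rewrite cardsU.
  have -> : (A :\: O) :&: Q = set0.
    by apply/disjoint_setI0; rewrite disjoint_sym (disjointWr (subsetDl A O)).
  by rewrite cards0 subn0 cardsDS // cardQO subnK ?subset_leq_card.
- have [y Qy] := set0Pn _ Q_neq0.
  have yB : y \in A :\: O :|: Q by rewrite inE Qy orbT.
  by apply: contraTneq yB => ->; rewrite (disjointFr disjQA Qy).
Qed.
End Exchange.

Section PrimeOrderPerm.
Variables (T : finType) (g : {perm T}).
Hypothesis pr_g : prime #[g].
Implicit Types (S B O Q : {set T}) (x y : T).

Local Notation stable S := [acts <[g]>, on S | 'P].
Local Notation Fg := 'Fix_'P[g].

Lemma porbit_fix x : x \in Fg -> porbit g x = [set x].
Proof. by rewrite porbitE -afix_cycle => /orbit1P. Qed.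

Lemma card_porbit_notfix x : x \notin Fg -> #|porbit g x| = #[g].
Proof.
move=> notFx; apply/(prime_nt_dvdP pr_g); last by rewrite porbitE dvdn_orbit.
apply: contra notFx => /eqP; rewrite porbitE => /card_orbit1/orbit1P.
by rewrite afix_cycle.
Qed.

Lemma acts_porbit x : stable (porbit g x).
Proof. by rewrite porbitE acts_orbit ?subsetT. Qed.

Lemma acts_sub_fix S : S \subset Fg -> stable S.
Proof. by rewrite -afix_cycle -astabC => /subset_trans; apply; apply: astab_sub. Qed.

Lemma porbit_sub S x : stable S -> x \in S -> porbit g x \subset S.
Proof. by rewrite porbitE => /acts_sub_orbit ->. Qed.

Lemma porbit_disjoint S y : stable S -> y \notin S -> [disjoint porbit g y & S].
Proof.
move=> actsS notSy; rewrite disjoints_subset porbit_sub // ?inE //.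
by rewrite /= astabsC.
Qed.

Lemma exists_notfix : exists x, x \notin Fg.
Proof.
apply/existsP; rewrite -negb_forall; apply: contraL (prime_gt1 pr_g) => /forallP fixT.
by rewrite order_gt1 negbK; apply/eqP/permP => x; rewrite perm1; have /afix1P := fixT x.
Qed.

Lemma acts_small_sub_fix S : stable S -> #|S| < #[g] -> S \subset Fg.
Proof.
move=> actsS; apply: contraTT => /subsetPn[x Sx notFx].
by rewrite -leqNgt -(card_porbit_notfix notFx) subset_leq_card ?porbit_sub.
Qed.

Lemma porbits_card1Vp C : C \in porbits g -> (#|C| == 1%N) || (#|C| == #[g]).
Proof.
case/imsetP => x _ ->; have [/porbit_fix -> | /card_porbit_notfix ->] := boolP (x \in Fg).
  by rewrite cards1.
by rewrite eqxx orbT.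
Qed.

Lemma card_porbits1 : #|[set C in porbits g | #|C| == 1%N]| = #|Fg|.
Proof.
suff -> : [set C in porbits g | #|C| == 1%N] = set1 @: Fg.
  by rewrite card_imset //; apply: set1_inj.
apply/setP => C; rewrite inE; apply/andP/imsetP => [[/imsetP[x _ ->] /eqP card1]|[x Fx ->]].
  have orb1 : orbit 'P <[g]> x = [set x] by apply: card_orbit1; rewrite -porbitE.
  by exists x; rewrite ?porbitE // -afix_cycle; apply/orbit1P.
by rewrite -(porbit_fix Fx) imset_f // porbit_fix // cards1.
Qed.

Lemma card_fix_add_porbits :
  (#|Fg| + #|[set C in porbits g | #|C| == #[g]]| * #[g])%N = #|T|.
Proof.
have actsT : [acts <[g]>, on [set: T] | 'P] by apply/actsP => h _ x; rewrite !inE.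
have porbitsT : porbit g @: [set: T] = porbits g.
  by apply/setP => C; apply/imsetP/imsetP => -[x _ ->]; exists x.
rewrite -cardsT -(acts_sum_card_orbit actsT) -porbitE porbitsT.
rewrite (bigID (fun C : {set T} => #|C| == 1%N)) /= -card_porbits1 -!sum1_card big_distrl /=.
congr (_ + _); apply: eq_big => C; rewrite ?inE.
- by [].
- by case/andP=> _ /eqP.
- have [PC|] //= := boolP (C \in porbits g).
  have p_gt1 := prime_gt1 pr_g.
  case/orP: (porbits_card1Vp PC) => /eqP ->.
    by rewrite (ltn_eqF p_gt1).
  by rewrite (gtn_eqF p_gt1) eqxx.
- by case/andP=> _ /eqP ->; rewrite mul1n.
Qed.

Section UniqueStableSet.
Variable A : {set T}.
Hypotheses (A_neq0 : A != set0) (A_small : #|A|.*2 < #|T|) (actsA : stable A).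
Hypothesis uniqA : forall B, stable B -> #|B| = #|A| -> B = A.

Lemma unique_stable_no_exchange O Q : stable O -> stable Q -> O \subset A ->
  [disjoint Q & A] -> #|Q| = #|O| -> Q != set0 -> False.
Proof.
move=> actsO actsQ sOA disjQA cardQO Q_neq0.
have [actsB cardB] := acts_exchange actsA actsO actsQ sOA disjQA cardQO Q_neq0.
by rewrite (uniqA actsB cardB) eqxx.
Qed.

Lemma unique_stable_sub_fix : A \subset Fg.
Proof.
apply/subsetP => x Ax; apply: contraT => notFx; exfalso.
have sOA := porbit_sub actsA Ax; have cardO := card_porbit_notfix notFx.
have [sCF | /subsetPn[y Cy notFy]] := boolP (~: A \subset Fg).
  have : #[g] <= #|~: A|.
    rewrite -cardO (leq_trans (subset_leq_card sOA)) // -(leq_add2l #|A|) cardsC.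
    by rewrite addnn ltnW.
  case/exists_subset_card => Q sQ cardQ.
  apply: (unique_stable_no_exchange (acts_porbit x) (acts_sub_fix (subset_trans sQ sCF)) sOA).
  - by rewrite disjoints_subset.
  - by rewrite cardQ cardO.
  - by rewrite -card_gt0 cardQ prime_gt0.
apply: (unique_stable_no_exchange (acts_porbit x) (acts_porbit y) sOA).
- by apply: porbit_disjoint; rewrite inE in Cy.
- by rewrite cardO card_porbit_notfix.
- by apply/set0Pn; exists y; apply: porbit_id.
Qed.

Lemma unique_stable_eq_fix : A = Fg.
Proof.
apply/eqP; rewrite eqEsubset unique_stable_sub_fix; apply/subsetP => y Fy.
apply: contraT => notAy; exfalso; have [x Ax] := set0Pn _ A_neq0.
apply: (unique_stable_no_exchange (O := [set x]) (Q := [set y])).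
- by rewrite acts_sub_fix // sub1set (subsetP unique_stable_sub_fix).
- by rewrite acts_sub_fix // sub1set.
- by rewrite sub1set.
- by rewrite disjoints_subset sub1set inE.
- by rewrite !cards1.
- by apply/set0Pn; exists y; rewrite inE.
Qed.

Lemma unique_stable_card_lt : #|A| < #[g].
Proof.
rewrite ltnNge; apply/negP => /exists_subset_card[O sOA cardO].
have [x notFx] := exists_notfix.
apply: (unique_stable_no_exchange _ (acts_porbit x) sOA).
- by rewrite acts_sub_fix // -unique_stable_eq_fix.
- by rewrite porbit_disjoint // unique_stable_eq_fix.
- by rewrite cardO card_porbit_notfix.
- by apply/set0Pn; exists x; apply: porbit_id.
Qed.

End UniqueStableSet.
End PrimeOrderPerm.

Lemma cycle_prime_order_eq (gT : finGroupType) (x y : gT) :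
  prime #[x] -> y \in <[x]> -> y != 1 -> <[y]> = <[x]>.
Proof.
move=> pr_x xy y_neq1; apply/eqP; rewrite eqEcard cycle_subG xy /=.
by rewrite -/#[y] (prime_nt_dvdP pr_x _ (order_dvdG xy)) ?order_eq1.
Qed.

Section OnOrdinals.
Variable n : nat.
Implicit Types (g h : {perm 'I_n}) (A B : {set 'I_n}).

Lemma set_fixed_astabs h A : set_fixed h A <-> h \in 'N(A | 'P).
Proof.
split => [fixA | /astabs_setact //].
by apply/astabsP => x; rewrite -{1}fixA; apply: mem_imset; apply: perm_inj.
Qed.

Lemma set_fixed_cycleP g A :
  (forall h, h \in <[g]> -> set_fixed h A) <-> [acts <[g]>, on A | 'P].
Proof.
split => [fixA | actsA h gh].
  by rewrite cycle_subG; apply/set_fixed_astabs/fixA/cycle_id.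
by apply/set_fixed_astabs; apply: (subsetP actsA).
Qed.

Lemma quasi_semiregular_prime k g : prime #[g] -> 0 < k -> k.*2 < n ->
  quasi_semiregular_on (ksubsets n k) g <-> #|'Fix_'P[g]| = k /\ k < #[g].
Proof.
move=> pr_g k_gt0 k2n; split.
  case=> A [/[!inE]/eqP cardA /set_fixed_cycleP actsA uniqA _].
  have A_neq0 : A != set0 by rewrite -card_gt0 cardA.
  have uniqA' B : [acts <[g]>, on B | 'P] -> #|B| = #|A| -> B = A.
    by move=> actsB cardB; apply: uniqA; [rewrite inE cardB cardA | apply/set_fixed_cycleP].
  have A_small : #|A|.*2 < #|'I_n| by rewrite card_ord cardA.
  split; first by rewrite -(unique_stable_eq_fix pr_g A_neq0 A_small actsA uniqA').
  by rewrite -cardA (unique_stable_card_lt pr_g A_neq0 A_small actsA uniqA').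
case=> cardF k_lt_p.
have stable_eq_fix B : #|B| = k -> [acts <[g]>, on B | 'P] -> B = 'Fix_'P[g].
  move=> cardB actsB; apply/eqP; rewrite eqEcard cardF cardB leqnn andbT.
  by rewrite acts_small_sub_fix // cardB.
exists 'Fix_'P[g]; split.
- by rewrite inE cardF.
- by apply/set_fixed_cycleP/acts_sub_fix.
- by move=> B /[!inE]/eqP cardB /set_fixed_cycleP/(stable_eq_fix B cardB).
move=> B /[!inE]/eqP cardB neqBF h gh /set_fixed_astabs Nh; apply/eqP.
apply: contraR neqBF => h_neq1; apply/eqP/stable_eq_fix => //.
by rewrite -(cycle_prime_order_eq pr_g gh h_neq1) cycle_subG.
Qed.

Lemma cycle_type_prime g : prime #[g] ->
  has_cycle_type_1k_pm g #|'Fix_'P[g]| #[g] ((n - #|'Fix_'P[g]|) %/ #[g])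
  /\ #[g] %| n - #|'Fix_'P[g]|.
Proof.
move=> pr_g; have := card_fix_add_porbits pr_g; rewrite card_ord => card_T.
have -> : n - #|'Fix_'P[g]| = (#|[set C in porbits g | #|C| == #[g]]| * #[g])%N.
  exact: canLR (addKn _) (esym card_T).
rewrite mulnK ?prime_gt0 // dvdn_mull //.
by split => //; split; [apply: card_porbits1 | | apply: porbits_card1Vp].
Qed.

End OnOrdinals.

Lemma card_set_ord_lt n k : k <= n -> #|[set x : 'I_n | x < k]| = k.
Proof.
move=> le_kn; have widen_inj : injective (widen_ord le_kn).
  by move=> x y /(congr1 val) /= /val_inj.
rewrite -[RHS]card_ord -(card_imset _ widen_inj).
apply: eq_card => x; rewrite inE; apply/idP/imsetP => [lt_xk | [y _ ->]].
  by exists (Ordinal lt_xk) => //; apply: val_inj.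
by rewrite /= ltn_ord.
Qed.

Section ShiftPerm.
Variables (n k c : nat).

Definition shift_nat j := if j < k then j else k + (j - k + c) %% (n - k).

Lemma shift_nat_lt j : j < n -> shift_nat j < n.
Proof.
rewrite /shift_nat; case: (ltnP j k) => // le_kj lt_jn.
by rewrite -ltn_subRL ltn_pmod // subn_gt0 (leq_ltn_trans le_kj lt_jn).
Qed.

Definition shift_ord (x : 'I_n) : 'I_n := Ordinal (shift_nat_lt (ltn_ord x)).

Lemma shift_ord_inj : injective shift_ord.
Proof.
move=> x y /(congr1 val); rewrite /= /shift_nat.
case: (ltnP x k) => [lt_xk | le_kx]; case: (ltnP y k) => [lt_yk | le_ky].
- exact: val_inj.
- by move=> xE; move: lt_xk; rewrite xE ltnNge leq_addr.
- by move=> yE; move: lt_yk; rewrite -yE ltnNge leq_addr.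
have lt_kn := leq_ltn_trans le_kx (ltn_ord x).
move/addnI/eqP; rewrite eqn_modDr !modn_small ?ltn_sub2r // => /eqP.
by move/(congr1 (addn k)); rewrite !subnKC // => /val_inj.
Qed.

Definition shift_perm : {perm 'I_n} := perm shift_ord_inj.

Lemma shift_permX i (x : 'I_n) :
  val ((shift_perm ^+ i) x) = if x < k then val x else k + (x - k + i * c) %% (n - k).
Proof.
elim: i => [|i IHi].
  rewrite expg0 perm1 /=; case: (ltnP x k) => // le_kx.
  by rewrite addn0 modn_small ?subnKC // ltn_sub2r // (leq_ltn_trans le_kx).
rewrite expgSr permM permE /= IHi /shift_nat; case: (ltnP x k) => [-> //|le_kx].
by rewrite ltnNge leq_addr /= addKn modnDml mulSnr addnA.
Qed.

Lemma shift_perm_fix : 0 < c < n - k -> 'Fix_'P[shift_perm] = [set x : 'I_n | x < k].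
Proof.
case/andP=> c_gt0 lt_cN; apply/setP => x; rewrite [RHS]inE.
have := shift_permX 1%N x; rewrite expg1 mul1n => sx.
apply/afix1P/idP => [/(congr1 val) | lt_xk]; last by apply: val_inj; rewrite /= sx lt_xk.
rewrite /= sx; case: (ltnP x k) => // le_kx.
have lt_xkN : x - k < n - k by rewrite ltn_sub2r // (leq_ltn_trans le_kx).
rewrite -{2}(subnKC le_kx) => /addnI sx_mod.
have : x - k + c = x - k + 0 %[mod n - k] by rewrite addn0 sx_mod modn_small.
by move/eqP; rewrite eqn_modDl mod0n modn_small // gtn_eqF.
Qed.

Lemma shift_perm_expg_eq1 i : n - k %| i * c -> shift_perm ^+ i = 1.
Proof.
case/dvdnP=> q icE; apply/permP => x; apply: val_inj.
rewrite shift_permX perm1 icE; case: (ltnP x k) => // le_kx.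
have lt_xkN : x - k < n - k by rewrite ltn_sub2r // (leq_ltn_trans le_kx).
by rewrite [_ + q * _]addnC modnMDl modn_small ?subnKC.
Qed.

End ShiftPerm.

Section ShiftPermPrime.
Variables (n k c p : nat).
Hypotheses (pr_p : prime p) (c_gt0 : 0 < c) (ncp : n - k = (c * p)%N).

Let lt_kn : k < n.
Proof. by rewrite -subn_gt0 ncp muln_gt0 c_gt0 prime_gt0. Qed.

Let fix_shift_perm : 'Fix_'P[shift_perm n k c] = [set x : 'I_n | x < k].
Proof. by rewrite shift_perm_fix // c_gt0 ncp ltn_Pmulr ?prime_gt1. Qed.

Lemma card_shift_perm_fix : #|'Fix_'P[shift_perm n k c]| = k.
Proof. by rewrite fix_shift_perm card_set_ord_lt // ltnW. Qed.

Lemma shift_perm_order : #[shift_perm n k c] = p.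
Proof.
apply/(prime_nt_dvdP pr_p); last by rewrite order_dvdn shift_perm_expg_eq1 // ncp mulnC.
rewrite order_eq1; have : Ordinal lt_kn \notin 'Fix_'P[shift_perm n k c].
  by rewrite fix_shift_perm inE ltnn.
by apply: contra => /eqP ->; apply/afix1P; rewrite act1.
Qed.

End ShiftPermPrime.

Theorem proposition6p2 (n k p : nat) :
  (1 <= k)%N -> (k.*2 < n)%N -> prime p ->
  ((exists g : {perm 'I_n}, #[g] = p /\ quasi_semiregular_on (ksubsets n k) g)
     <-> ((k < p)%N /\ p %| n - k))
  /\
  (forall g : {perm 'I_n}, #[g] = p -> quasi_semiregular_on (ksubsets n k) g ->
     has_cycle_type_1k_pm g k p ((n - k) %/ p)).
Proof.
move=> k_gt0 k2n pr_p.
have qsrP (g : {perm 'I_n}) : #[g] = p ->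
    quasi_semiregular_on (ksubsets n k) g <-> #|'Fix_'P[g]| = k /\ k < p.
  by move=> og; rewrite -og; apply: quasi_semiregular_prime; rewrite ?og.
have cycle_typeP (g : {perm 'I_n}) : #[g] = p -> #|'Fix_'P[g]| = k ->
    has_cycle_type_1k_pm g k p ((n - k) %/ p) /\ p %| n - k.
  by move=> og cardF; rewrite -og -cardF; apply: cycle_type_prime; rewrite og.
split; [split|].
- case=> g [og /(qsrP g og)[cardF lt_kp]].
  by have [_] := cycle_typeP g og cardF.
- case=> lt_kp dvd_p; set c := (n - k) %/ p.
  have ncp : n - k = (c * p)%N by rewrite divnK.
  have c_gt0 : 0 < c.
    rewrite divn_gt0 ?prime_gt0 // dvdn_leq // subn_gt0.
    by apply: leq_ltn_trans k2n; rewrite -addnn leq_addr.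
  have og := shift_perm_order pr_p c_gt0 ncp.
  exists (shift_perm n k c); split => //; apply/qsrP => //; split => //.
  exact: card_shift_perm_fix pr_p c_gt0 ncp.
- by move=> g og /(qsrP g og)[cardF _]; have [] := cycle_typeP g og cardF.
Qed.
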